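(* Let $R>0$, let $\Theta$ be a smooth function on $[0,R]$ that is positive on $[0,R)$, let $\sigma\in\mathbb{R}\setminus\{0\}$, and let $u$ be a positive first eigenfunction of $$u''+\frac{\Theta'}{\Theta}u'+\lambda u=0 \text{ on }[0,R],\qquad u'(0)=\sigma u(0),\qquad u'(R)=0,$$ with first eigenvalue $\lambda_1(R,\Theta,\sigma)$. Then: (a) if $\sigma>0$, then $u'>0$ on $[0,R)$; (b) if $\sigma<0$, then $u'<0$ on $[0,R)$; (c) if $\sigma>0$ and $0<\bar R<R$, then $\lambda_1(R,\Theta,\sigma)<\lambda_1(\bar R,\Theta,\sigma)$, where $\lambda_1(\bar R,\Theta,\sigma)$ is the first eigenvalue of the same problem on $[0,\bar R]$ with conditions $u'(0)=\sigma u(0)$, $u'(\bar R)=0$. Moreover, set $\sigma(r)=u'(r)/u(r)$ and assume in addition that $(\log\Theta)''<0$ on $[0,R)$. Then: (d) if $\sigma>0$, then $0\leq\sigma(r)\leq\sigma$ for all $r\in[0,R]$; (e) if $\sigma<0$, then $\sigma\leq\sigma(r)\leq0$ for all $r\in[0,R]$.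
   Context: The eigenvalue problem is the spectral problem for $Lu=-u''-\frac{\Theta'}{\Theta}u'$ on $L^2([0,R],\Theta(r)\,dr)$ with the given boundary conditions; its first eigenvalue is $\lambda_1(R,\Theta,\sigma)=\inf_{u\in H^1[0,R]}\frac{\int_0^Ru'^2\Theta\,dr+\sigma u(0)^2}{\int_0^Ru^2\Theta\,dr}$. *)

From Stdlib Require Import Reals.
From Coquelicot Require Import Coquelicot.
Open Scope R_scope.

(* Smooth function on R.  (A smooth function on [0,R] in the one-sided sense
   extends to a smooth function on R, so this is no loss of generality.) *)
Definition smooth (f : R -> R) : Prop :=
  forall (n : nat) (x : R), ex_derive (Derive_n f n) x.

(* C^2 function on R (again: a C^2 function on [0,R] extends to R). *)
Definition C2 (f : R -> R) : Prop :=
  (forall x, ex_derive f x) /\ (forall x, ex_derive (Derive f) x) /\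
  (forall x, continuous (Derive_n f 2) x).

(* u is an eigenfunction, with eigenvalue lam, of
     u'' + (Theta'/Theta) u' + lam u = 0  on [0,Rr),
     u'(0) = sigma u(0),  u'(Rr) = 0,
   u nonzero on [0,Rr].  The equation is imposed on [0,Rr) because Theta may
   vanish at Rr (it is only assumed positive on [0,Rr)). *)
Definition is_eigenpair (Rr : R) (Theta : R -> R) (sigma lam : R) (u : R -> R)
  : Prop :=
  C2 u /\
  (exists x, 0 <= x <= Rr /\ u x <> 0) /\
  (forall r, 0 <= r < Rr ->
     Derive_n u 2 r + Derive Theta r / Theta r * Derive u r + lam * u r = 0) /\
  Derive u 0 = sigma * u 0 /\
  Derive u Rr = 0.

Definition lambda1 (Rr : R) (Theta : R -> R) (sigma : R) : Rbar :=
  Glb_Rbar (fun lam => exists u, is_eigenpair Rr Theta sigma lam u).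

From Stdlib Require Import Reals Lra.
From Coquelicot Require Import Coquelicot.
Open Scope R_scope.

(* The flux [Theta u'] satisfies [(Theta u')' = - lam Theta u] and vanishes at [Rr]; since
   [u > 0], this forces [u'] to keep the sign of [sigma] on [[0, Rr)].

   For [Rb < Rr] and an eigenpair [(mu, v)] on [[0, Rb]], the quotient [w = v / u] solves
   [(Theta u^2 w')' = - (mu - lam) Theta u^2 w] with [w'(0) = 0] and a Robin condition at
   [Rb] whose coefficient [Theta u u'(Rb)] is positive by the above. An energy argument gives
   [mu >= lam], and a sup-norm estimate gives [mu - lam >= 1 / K] with [K] depending only on
   [u]; hence the infimum of the [mu] exceeds [lam] strictly.

   Finally [s = u' / u] solves the Riccati equation [s' = - (log Theta)' s - lam - s^2]. At an
   interior critical point [s'' = - (log Theta)'' s] has the sign of [s], so [|s|] attains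
   its maximum at an endpoint, where it equals [|sigma|] or [0]. *)

(* [auto_derive] leaves eta-expanded terms [Derive (fun y => f y) x] behind. *)
Ltac eta_Derive :=
  repeat match goal with
  | |- context [Derive (fun y => ?f y) ?x] => change (Derive (fun y => f y) x) with (Derive f x)
  end.

Lemma continuity_pt_of_ex_derive (f : R -> R) x : ex_derive f x -> continuity_pt f x.
Proof. intros H. apply continuity_pt_filterlim. exact (ex_derive_continuous f x H). Qed.

Lemma MVT_Derive (f : R -> R) a b : a < b ->
  (forall x, a <= x <= b -> ex_derive f x) ->
  exists c, a < c < b /\ f b - f a = Derive f c * (b - a).
Proof.
  intros Hab Hf.
  destruct (MVT_cor2 f (Derive f) a b Hab) as [c [Hc Hcab]].
  - intros c Hc. apply is_derive_Reals, Derive_correct, Hf, Hc.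
  - exists c. split; assumption.
Qed.

Lemma le_of_Derive_nonneg (f : R -> R) a b : a <= b ->
  (forall x, a <= x <= b -> ex_derive f x) ->
  (forall x, a < x < b -> 0 <= Derive f x) -> f a <= f b.
Proof.
  intros Hab Hf Hpos. destruct (Req_dec a b) as [->|Hne]; [lra|].
  destruct (MVT_Derive f a b) as [c [Hc Hfab]]; [lra|assumption|].
  specialize (Hpos c Hc). nra.
Qed.

Lemma Rabs_sub_le_of_Derive_bound (f : R -> R) B a b : a <= b ->
  (forall x, a <= x <= b -> ex_derive f x) ->
  (forall x, a < x < b -> Rabs (Derive f x) <= B) ->
  Rabs (f b - f a) <= B * (b - a).
Proof.
  intros Hab Hf HB. destruct (Req_dec a b) as [->|Hne].
  { unfold Rminus. rewrite Rplus_opp_r, Rabs_R0. lra. }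
  destruct (MVT_Derive f a b) as [c [Hc ->]]; [lra|assumption|].
  rewrite Rabs_mult, (Rabs_right (b - a)) by lra.
  apply Rmult_le_compat_r; [lra|auto].
Qed.

Lemma Derive_interior_max (f : R -> R) a b c : a < c < b -> ex_derive f c ->
  (forall x, a < x < b -> f x <= f c) -> Derive f c = 0.
Proof.
  intros Hc Hf Hmax. rewrite <- (Derive_Reals f c (ex_derive_Reals_0 f c Hf)).
  apply (deriv_maximum f a b); try lra. intros x Hax Hxb. apply Hmax. lra.
Qed.

Lemma lt_right_of_is_derive_pos (f : R -> R) c l : is_derive f c l -> 0 < l ->
  exists d, 0 < d /\ forall x, c < x < c + d -> f c < f x.
Proof.
  intros Hd Hl. apply is_derive_Reals in Hd.
  destruct (Hd (l / 2) ltac:(lra)) as [[d Hd0] Hquot]. simpl in Hquot.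
  exists d. split; [assumption|]. intros x Hx.
  specialize (Hquot (x - c) ltac:(lra) ltac:(rewrite Rabs_right; lra)).
  replace (c + (x - c)) with x in Hquot by ring.
  apply Rabs_lt_between' in Hquot.
  assert (Hslope : 0 < (f x - f c) / (x - c)) by lra.
  assert (E : f x - f c = (f x - f c) / (x - c) * (x - c)) by (field; lra).
  nra.
Qed.

(* Every interior critical point is a strict local minimum, so none is a maximum. *)
Lemma max_at_endpoint (f g : R -> R) a b : a < b ->
  (forall x, a <= x <= b -> ex_derive f x) ->
  (forall x, a < x < b -> Derive f x = g x) ->
  (forall x, a < x < b -> g x = 0 -> exists l, 0 < l /\ is_derive g x l) ->
  forall x, a <= x <= b -> f x <= Rmax (f a) (f b).
Proof.
  intros Hab Hf Hfg Hcrit.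
  destruct (continuity_ab_maj f a b ltac:(lra)) as [m [Hmax Hm]].
  { intros x Hx. apply continuity_pt_of_ex_derive, Hf, Hx. }
  intros x Hx. eapply Rle_trans; [apply Hmax, Hx|].
  destruct (Req_dec m a) as [->|Hma]; [apply Rmax_l|].
  destruct (Req_dec m b) as [->|Hmb]; [apply Rmax_r|].
  exfalso.
  assert (Hg0 : g m = 0).
  { rewrite <- Hfg by lra. apply (Derive_interior_max f a b); [lra|apply Hf; lra|].
    intros y Hy. apply Hmax. lra. }
  destruct (Hcrit m ltac:(lra) Hg0) as [l [Hl Hgl]].
  destruct (lt_right_of_is_derive_pos g m l Hgl Hl) as [d [Hd Hgpos]].
  set (y := m + Rmin d (b - m) / 2).
  assert (Hmin : 0 < Rmin d (b - m) /\ Rmin d (b - m) <= d /\ Rmin d (b - m) <= b - m).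
  { split; [apply Rmin_pos; lra|split; [apply Rmin_l|apply Rmin_r]]. }
  destruct (MVT_Derive f m y) as [c [Hc Hfy]];
    [unfold y; lra|intros; apply Hf; unfold y in *; lra|].
  rewrite Hfg in Hfy by (unfold y in *; lra).
  specialize (Hgpos c ltac:(unfold y in *; lra)). rewrite Hg0 in Hgpos.
  assert (Hy : f y <= f m) by (apply Hmax; unfold y; lra).
  assert (0 < y - m) by (unfold y; lra).
  nra.
Qed.

Lemma continuous_pos_bounds (f : R -> R) a b : a <= b ->
  (forall x, a <= x <= b -> continuity_pt f x) -> (forall x, a <= x <= b -> 0 < f x) ->
  exists m M, 0 < m /\ forall x, a <= x <= b -> m <= f x <= M.
Proof.
  intros Hab Hc Hpos.
  destruct (continuity_ab_min f a b Hab Hc) as [xm [Hmin Hxm]].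
  destruct (continuity_ab_maj f a b Hab Hc) as [xM [Hmax _]].
  exists (f xm), (f xM). split; [apply Hpos, Hxm|]. intros x Hx. split; auto.
Qed.

Lemma Rbar_le_Glb_Rbar (E : R -> Prop) a : (forall x, E x -> a <= x) ->
  Rbar_le a (Glb_Rbar E).
Proof. intros H. apply (Glb_Rbar_correct E). exact H. Qed.

Lemma pos_of_deriv_proportional (g k : R -> R) lam b : 0 < b ->
  (forall x, 0 <= x <= b -> ex_derive g x) ->
  (forall x, 0 <= x < b -> is_derive g x (- lam * k x)) ->
  (forall x, 0 <= x < b -> 0 < k x) -> 0 < g 0 -> g b = 0 ->
  forall r, 0 <= r < b -> 0 < g r.
Proof.
  intros Hb Hg Hg' Hk Hg0 Hgb.
  assert (Hlam : 0 < lam).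
  { destruct (Rle_or_lt lam 0) as [Hlam|]; [exfalso|assumption].
    assert (g 0 <= g b); [|lra].
    apply le_of_Derive_nonneg; [lra|assumption|].
    intros x Hx. rewrite (is_derive_unique _ _ _ (Hg' x ltac:(lra))).
    specialize (Hk x ltac:(lra)). nra. }
  intros r Hr.
  destruct (MVT_Derive g r b) as [c [Hc Hmvt]]; [lra|intros; apply Hg; lra|].
  rewrite (is_derive_unique _ _ _ (Hg' c ltac:(lra))) in Hmvt.
  specialize (Hk c ltac:(lra)).
  assert (0 < lam * k c * (b - r)) by (repeat apply Rmult_lt_0_compat; lra).
  nra.
Qed.

Lemma riccati_le_initial (s a L : R -> R) lam b eps : 0 < b ->
  (forall x, 0 <= x <= b -> ex_derive s x) ->
  (forall x, 0 < x < b -> Derive s x = - a x * s x - lam - s x ^ 2) ->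
  (forall x, 0 < x < b -> is_derive a x (L x)) -> (forall x, 0 < x < b -> L x < 0) ->
  (forall x, 0 < x < b -> 0 < eps * s x) -> eps * s b <= eps * s 0 ->
  forall r, 0 <= r <= b -> eps * s r <= eps * s 0.
Proof.
  intros Hb Hs Hs' Ha HL Hpos Hsb r Hr.
  eapply Rle_trans;
    [apply (max_at_endpoint (fun x => eps * s x)
              (fun x => eps * (- a x * s x - lam - s x ^ 2)) 0 b)|];
    [lra|..|assumption|apply Rmax_lub; lra].
  - intros x Hx. apply ex_derive_scal, Hs, Hx.
  - intros x Hx. rewrite Derive_scal, Hs' by lra. reflexivity.
  - intros x Hx Hcrit.
    specialize (Hpos x Hx). specialize (HL x Hx).
    assert (Hh : - a x * s x - lam - s x ^ 2 = 0).
    { apply Rmult_integral in Hcrit. destruct Hcrit as [He|]; [|assumption].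
      rewrite He in Hpos. lra. }
    exists (- L x * (eps * s x)). split; [nra|].
    assert (Has : ex_derive a x) by (exists (L x); apply Ha, Hx).
    auto_derive; [repeat split; [exact Has|apply Hs; lra..]|].
    eta_Derive.
    rewrite (is_derive_unique a x (L x)) by (apply Ha, Hx).
    rewrite Hs', Hh by lra. ring.
Qed.

Lemma is_derive_log_deriv (f : R -> R) x : (forall y, ex_derive f y) ->
  ex_derive (Derive f) x -> 0 < f x ->
  is_derive (fun y => Derive f y / f y) x (Derive_n (fun y => ln (f y)) 2 x).
Proof.
  intros Hf Hf' Hpos.
  assert (Hnear : locally x (fun y => 0 < f y)).
  { exact (ex_derive_continuous f x (Hf x) _ (open_gt 0 (f x) Hpos)). }
  change (Derive_n (fun y => ln (f y)) 2 x) with (Derive (Derive (fun y => ln (f y))) x).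
  rewrite (Derive_ext_loc _ (fun y => Derive f y / f y)).
  - apply Derive_correct. auto_derive. repeat split; auto; lra.
  - eapply filter_imp; [|exact Hnear]. intros y Hy.
    apply is_derive_unique. auto_derive; [repeat split; auto; lra|].
    eta_Derive. field. lra.
Qed.

(* The first-order form of [(p w')' = - eps p w] on [0, b] with [w'(0) = 0] and the Robin
   condition [p(b) w'(b) = - c w(b)]; [W] plays the role of [p w']. *)
Section RobinProblem.

Variables (w W p : R -> R) (eps b c : R).
Hypotheses (Hb : 0 < b) (Hc : 0 < c)
  (Hw : forall x, 0 <= x <= b -> ex_derive w x)
  (Hw' : forall x, 0 <= x <= b -> Derive w x = W x / p x)
  (HW : forall x, 0 <= x <= b -> ex_derive W x)
  (HW' : forall x, 0 <= x < b -> Derive W x = - eps * p x * w x)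
  (Hp : forall x, 0 <= x <= b -> 0 < p x)
  (HW0 : W 0 = 0) (HWb : W b = - c * w b)
  (Hnz : exists x, 0 <= x <= b /\ w x <> 0).

(* If [eps < 0] then [(w W)' = W^2 / p - eps p w^2 >= 0], while [w W] vanishes at [0]
   and is nonpositive at [b]. *)
Lemma robin_eigenvalue_nonneg : 0 <= eps.
Proof.
  destruct (Rle_or_lt 0 eps) as [|Hneg]; [assumption|exfalso].
  set (f := fun x => w x * W x).
  assert (Hf : forall x, 0 <= x <= b -> ex_derive f x).
  { intros x Hx. apply ex_derive_mult; auto. }
  assert (Hf' : forall x, 0 <= x < b -> Derive f x = W x ^ 2 / p x - eps * p x * w x ^ 2).
  { intros x Hx. specialize (Hp x ltac:(lra)).
    unfold f. rewrite Derive_mult by (apply Hw || apply HW; lra).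
    rewrite Hw', HW' by lra. field. lra. }
  assert (Hf'_terms : forall x, 0 <= x < b ->
            0 <= W x ^ 2 / p x /\ 0 <= - eps * p x * w x ^ 2).
  { intros x Hx. specialize (Hp x ltac:(lra)).
    assert (0 <= W x ^ 2 / p x) by (apply Rdiv_le_0_compat; [apply pow2_ge_0|lra]).
    assert (0 <= p x * w x ^ 2) by (apply Rmult_le_pos; [lra|apply pow2_ge_0]).
    split; [assumption|nra]. }
  assert (Hf_mono : forall x y, 0 <= x <= y -> y <= b -> f x <= f y).
  { intros x y Hxy Hyb. apply le_of_Derive_nonneg; [lra|intros; apply Hf; lra|].
    intros z Hz. rewrite Hf' by lra. destruct (Hf'_terms z ltac:(lra)). lra. }
  assert (Hfb : f b = - c * w b ^ 2) by (unfold f; rewrite HWb; ring).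
  assert (Hf0 : f 0 = 0) by (unfold f; rewrite HW0; ring).
  assert (Hwb2 : 0 <= w b ^ 2) by apply pow2_ge_0.
  assert (Hzero : forall x, 0 <= x <= b -> f x = 0).
  { intros x Hx. assert (f 0 <= f x) by (apply Hf_mono; lra).
    assert (f x <= f b) by (apply Hf_mono; lra). nra. }
  assert (Hwb : w b = 0).
  { apply Rsqr_eq_0. unfold Rsqr. specialize (Hzero b ltac:(lra)). nra. }
  assert (Hflat : forall x, 0 < x < b -> Derive w x = 0).
  { intros x Hx.
    assert (HD : Derive f x = 0).
    { apply (Derive_interior_max f 0 b); [lra|apply Hf; lra|].
      intros y Hy. rewrite !Hzero by lra. lra. }
    rewrite Hf' in HD by lra. destruct (Hf'_terms x ltac:(lra)).
    specialize (Hp x ltac:(lra)).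
    assert (HWx : W x = 0).
    { apply Rsqr_eq_0. unfold Rsqr.
      replace (W x * W x) with (W x ^ 2 / p x * p x) by (field; lra). nra. }
    rewrite Hw', HWx by lra. unfold Rdiv. ring. }
  destruct Hnz as [x [Hx Hwx]]. apply Hwx.
  destruct (Req_dec x b) as [->|Hxb]; [exact Hwb|].
  destruct (MVT_Derive w x b) as [z [Hz Hmvt]]; [lra|intros; apply Hw; lra|].
  rewrite Hflat in Hmvt by lra. lra.
Qed.

(* Sup-norm estimate: with [M = max |w|], first [|W| <= |eps| P M b], hence
   [|w'| <= |eps| P M b / p0] and [|w(b)| = |W(b)| / c <= |eps| P M b / c], and
   [M <= |w(b)| + b max |w'|]. *)
Lemma robin_eigenvalue_abs_lower_bound p0 P : 0 < p0 ->
  (forall x, 0 <= x <= b -> p0 <= p x <= P) ->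
  1 <= Rabs eps * (P * b * b / p0 + P * b / c).
Proof.
  intros Hp0 HpP.
  destruct (continuity_ab_maj (fun x => Rabs (w x)) 0 b ltac:(lra)) as [x0 [Hmax Hx0]].
  { intros x Hx. apply (continuity_pt_comp w Rabs).
    - apply continuity_pt_of_ex_derive, Hw, Hx.
    - apply Rcontinuity_abs. }
  set (M := Rabs (w x0)).
  assert (HM : 0 < M).
  { destruct Hnz as [x [Hx Hwx]]. apply Rlt_le_trans with (Rabs (w x)).
    - apply Rabs_pos_lt, Hwx.
    - apply Hmax, Hx. }
  set (B := Rabs eps * P * M * b).
  assert (HB : 0 <= B).
  { destruct (HpP 0 ltac:(lra)). pose proof (Rabs_pos eps).
    unfold B. repeat apply Rmult_le_pos; lra. }
  assert (HWbound : forall x, 0 <= x <= b -> Rabs (W x) <= B).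
  { intros x Hx. replace (W x) with (W x - W 0) by (rewrite HW0; ring).
    eapply Rle_trans.
    - apply (Rabs_sub_le_of_Derive_bound W (Rabs eps * P * M)); [lra|intros; apply HW; lra|].
      intros y Hy. rewrite HW' by lra.
      destruct (HpP y ltac:(lra)). specialize (Hmax y ltac:(lra)). cbv beta in Hmax.
      pose proof (Rabs_pos eps). pose proof (Rabs_pos (w y)).
      rewrite !Rabs_mult, Rabs_Ropp, (Rabs_right (p y)) by lra.
      rewrite !Rmult_assoc. apply Rmult_le_compat_l; [lra|].
      fold M in Hmax. nra.
    - unfold B. pose proof (Rabs_pos eps). destruct (HpP 0 ltac:(lra)).
      assert (0 <= Rabs eps * P * M) by (repeat apply Rmult_le_pos; lra). nra. }
  assert (Hw'bound : forall x, 0 < x < b -> Rabs (Derive w x) <= B / p0).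
  { intros x Hx. destruct (HpP x ltac:(lra)).
    rewrite Hw', Rabs_div, (Rabs_right (p x)) by lra.
    unfold Rdiv. apply Rmult_le_compat.
    - apply Rabs_pos.
    - left. apply Rinv_0_lt_compat. lra.
    - apply HWbound. lra.
    - apply Rinv_le_contravar; lra. }
  assert (Hwb : Rabs (w b) <= B / c).
  { replace (w b) with (- W b / c) by (rewrite HWb; field; lra).
    rewrite Rabs_div, Rabs_Ropp, (Rabs_right c) by lra.
    unfold Rdiv. apply Rmult_le_compat_r.
    - left. apply Rinv_0_lt_compat. lra.
    - apply HWbound. lra. }
  assert (Hosc : Rabs (w b - w x0) <= B / p0 * b).
  { eapply Rle_trans.
    - apply (Rabs_sub_le_of_Derive_bound w (B / p0)); [lra|intros; apply Hw; lra|].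
      intros x Hx. apply Hw'bound. lra.
    - assert (0 <= B / p0) by (apply Rdiv_le_0_compat; lra). nra. }
  assert (HMK : M <= M * (Rabs eps * (P * b * b / p0 + P * b / c))).
  { replace (M * (Rabs eps * (P * b * b / p0 + P * b / c))) with (B / c + B / p0 * b)
      by (unfold B; field; lra).
    unfold M. replace (w x0) with (w b - (w b - w x0)) by ring.
    eapply Rle_trans; [apply Rabs_triang|]. rewrite Rabs_Ropp. lra. }
  apply (Rmult_le_reg_l M); lra.
Qed.

Lemma robin_eigenvalue_lower_bound p0 P : 0 < p0 ->
  (forall x, 0 <= x <= b -> p0 <= p x <= P) ->
  1 / (P * b * b / p0 + P * b / c) <= eps.
Proof.
  intros Hp0 HpP.
  assert (HK := robin_eigenvalue_abs_lower_bound p0 P Hp0 HpP).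
  assert (Heps := robin_eigenvalue_nonneg).
  rewrite Rabs_right in HK by lra.
  set (K := P * b * b / p0 + P * b / c) in *.
  assert (HK0 : 0 < K) by nra.
  apply (Rmult_le_reg_r K); [assumption|].
  unfold Rdiv. rewrite Rmult_1_l, Rinv_l by lra. lra.
Qed.

End RobinProblem.

Definition eigen_ode (Theta : R -> R) (lam : R) (u : R -> R) (x : R) : Prop :=
  Derive_n u 2 x + Derive Theta x / Theta x * Derive u x + lam * u x = 0.

Lemma Derive_Derive_eigen_ode Theta lam u x : eigen_ode Theta lam u x ->
  Derive (Derive u) x = - (Derive Theta x / Theta x * Derive u x) - lam * u x.
Proof. unfold eigen_ode. change (Derive_n u 2 x) with (Derive (Derive u) x). lra. Qed.

Section EigenOdeAt.

Variables (Theta u : R -> R) (lam x : R).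
Hypotheses (HTd : ex_derive Theta x) (HT : Theta x <> 0)
  (Hud : ex_derive u x) (Hudd : ex_derive (Derive u) x) (Hode : eigen_ode Theta lam u x).

Lemma is_derive_flux :
  is_derive (fun y => Theta y * Derive u y) x (- lam * (Theta x * u x)).
Proof.
  auto_derive; [repeat split; assumption|].
  eta_Derive.
  rewrite (Derive_Derive_eigen_ode _ _ _ _ Hode). field. exact HT.
Qed.

Lemma is_derive_wronskian v mu : ex_derive v x -> ex_derive (Derive v) x ->
  eigen_ode Theta mu v x ->
  is_derive (fun y => Theta y * (u y * Derive v y - v y * Derive u y)) x
    (- (mu - lam) * (Theta x * u x * v x)).
Proof.
  intros Hvd Hvdd Hodev.
  auto_derive; [repeat split; assumption|].
  eta_Derive.
  rewrite (Derive_Derive_eigen_ode _ _ _ _ Hode), (Derive_Derive_eigen_ode _ _ _ _ Hodev).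
  field. exact HT.
Qed.

Lemma is_derive_riccati : u x <> 0 ->
  is_derive (fun y => Derive u y / u y) x
    (- (Derive Theta x / Theta x) * (Derive u x / u x) - lam - (Derive u x / u x) ^ 2).
Proof.
  intros Hu.
  auto_derive; [repeat split; assumption|].
  eta_Derive.
  rewrite (Derive_Derive_eigen_ode _ _ _ _ Hode). field. split; assumption.
Qed.

End EigenOdeAt.

Section PositiveEigenfunction.

Variables (Rr : R) (Theta u : R -> R) (sigma lam : R).
Hypotheses (HR : 0 < Rr)
  (HTd : forall x, ex_derive Theta x) (HT : forall r, 0 <= r < Rr -> 0 < Theta r)
  (Hud : forall x, ex_derive u x) (Hudd : forall x, ex_derive (Derive u) x)
  (Hode : forall r, 0 <= r < Rr -> eigen_ode Theta lam u r)
  (Hu0 : Derive u 0 = sigma * u 0) (HuR : Derive u Rr = 0)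
  (Hu : forall r, 0 <= r <= Rr -> 0 < u r).

Lemma eigenfunction_deriv_sign eps : 0 < eps * sigma ->
  forall r, 0 <= r < Rr -> 0 < eps * Derive u r.
Proof.
  intros Hsig r Hr.
  assert (Hflux : 0 < eps * (Theta r * Derive u r)).
  { apply (pos_of_deriv_proportional (fun x => eps * (Theta x * Derive u x))
             (fun x => Theta x * u x) (eps * lam) Rr HR); [..|exact Hr].
    - intros x _. apply ex_derive_scal, ex_derive_mult; auto.
    - intros x Hx. replace (- (eps * lam) * (Theta x * u x))
        with (eps * (- lam * (Theta x * u x))) by ring.
      apply is_derive_scal, is_derive_flux; auto.
      pose proof (HT x Hx). lra.
    - intros x Hx. apply Rmult_lt_0_compat; [apply HT|apply Hu]; lra.
    - rewrite Hu0. pose proof (HT 0 ltac:(lra)). pose proof (Hu 0 ltac:(lra)).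
      replace (eps * (Theta 0 * (sigma * u 0))) with (Theta 0 * u 0 * (eps * sigma)) by ring.
      apply Rmult_lt_0_compat; [apply Rmult_lt_0_compat|]; assumption.
    - rewrite HuR. ring. }
  pose proof (HT r Hr). nra.
Qed.

Lemma log_deriv_bound eps : (forall x, ex_derive (Derive Theta) x) ->
  (forall r, 0 <= r < Rr -> Derive_n (fun s => ln (Theta s)) 2 r < 0) ->
  0 < eps * sigma ->
  forall r, 0 <= r <= Rr -> 0 <= eps * (Derive u r / u r) <= eps * sigma.
Proof.
  intros HTdd Hconc Hsig r Hr.
  assert (Hpos : forall x, 0 <= x < Rr -> 0 < eps * (Derive u x / u x)).
  { intros x Hx. pose proof (Hu x ltac:(lra)).
    replace (eps * (Derive u x / u x)) with (eps * Derive u x / u x) by (field; lra).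
    apply Rdiv_lt_0_compat; [apply eigenfunction_deriv_sign|]; assumption. }
  assert (HsR : Derive u Rr / u Rr = 0) by (rewrite HuR; unfold Rdiv; ring).
  assert (Hs0 : Derive u 0 / u 0 = sigma).
  { rewrite Hu0. field. pose proof (Hu 0 ltac:(lra)). lra. }
  split.
  - destruct (Req_dec r Rr) as [->|Hne]; [rewrite HsR; lra|].
    left. apply Hpos. lra.
  - rewrite <- Hs0.
    apply (riccati_le_initial (fun x => Derive u x / u x) (fun x => Derive Theta x / Theta x)
             (fun x => Derive_n (fun s => ln (Theta s)) 2 x) lam Rr eps HR);
      [..|rewrite HsR, Hs0; lra|exact Hr].
    + intros x Hx. pose proof (Hu x Hx). auto_derive. repeat split; auto. lra.
    + intros x Hx. apply is_derive_unique, is_derive_riccati; auto.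
      * pose proof (HT x ltac:(lra)). lra.
      * apply Hode. lra.
      * pose proof (Hu x ltac:(lra)). lra.
    + intros x Hx. apply is_derive_log_deriv; auto. apply HT. lra.
    + intros x Hx. apply Hconc. lra.
    + intros x Hx. apply Hpos. lra.
Qed.

Lemma eigenvalue_gap Rb : 0 < sigma -> 0 < Rb < Rr ->
  exists delta, 0 < delta /\
    forall mu v, is_eigenpair Rb Theta sigma mu v -> lam + delta <= mu.
Proof.
  intros Hsig HRb.
  set (p := fun x => Theta x * (u x * u x)).
  assert (Hp : forall x, 0 <= x <= Rb -> 0 < p x).
  { intros x Hx. pose proof (HT x ltac:(lra)). pose proof (Hu x ltac:(lra)).
    unfold p. repeat apply Rmult_lt_0_compat; assumption. }
  destruct (continuous_pos_bounds p 0 Rb) as [p0 [P [Hp0 HpP]]]; [lra| |exact Hp|].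
  { intros x Hx. apply continuity_pt_of_ex_derive. unfold p. auto_derive. auto. }
  set (c := Theta Rb * u Rb * Derive u Rb).
  assert (Hc : 0 < c).
  { pose proof (HT Rb ltac:(lra)). pose proof (Hu Rb ltac:(lra)).
    pose proof (eigenfunction_deriv_sign 1 ltac:(lra) Rb ltac:(lra)).
    unfold c. repeat apply Rmult_lt_0_compat; lra. }
  assert (HP : 0 < P) by (destruct (HpP 0 ltac:(lra)); lra).
  exists (1 / (P * Rb * Rb / p0 + P * Rb / c)). split.
  { apply Rdiv_lt_0_compat; [lra|].
    apply Rplus_lt_0_compat;
      (apply Rdiv_lt_0_compat; [repeat apply Rmult_lt_0_compat; lra|assumption]). }
  intros mu v [[Hvd [Hvdd _]] [[x [Hx Hvx]] [Hodev [Hv0 HvR]]]].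
  enough (1 / (P * Rb * Rb / p0 + P * Rb / c) <= mu - lam) by lra.
  apply (robin_eigenvalue_lower_bound (fun x => v x / u x)
           (fun x => Theta x * (u x * Derive v x - v x * Derive u x)) p (mu - lam) Rb c);
    try lra; try assumption.
  - intros y Hy. pose proof (Hu y ltac:(lra)). auto_derive. repeat split; auto. lra.
  - intros y Hy. pose proof (Hu y ltac:(lra)). pose proof (HT y ltac:(lra)).
    apply is_derive_unique. auto_derive; [repeat split; auto; lra|].
    eta_Derive. unfold p. field. lra.
  - intros y Hy. auto_derive. repeat split; auto.
  - intros y Hy. pose proof (Hu y ltac:(lra)). pose proof (HT y ltac:(lra)).
    apply is_derive_unique.
    replace (- (mu - lam) * p y * (v y / u y)) with (- (mu - lam) * (Theta y * u y * v y))
      by (unfold p; field; lra).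
    apply is_derive_wronskian; auto; [lra|apply Hode; lra|apply Hodev; lra].
  - cbv beta. rewrite Hu0, Hv0. ring.
  - cbv beta. rewrite HvR. unfold c. field. pose proof (Hu Rb ltac:(lra)). lra.
  - exists x. split; [assumption|]. pose proof (Hu x ltac:(lra)).
    intro E. apply Hvx. replace (v x) with (v x / u x * u x) by (field; lra).
    rewrite E. ring.
Qed.

End PositiveEigenfunction.

Theorem lemma3p1 (Rr : R) (Theta u : R -> R) (sigma lam : R) :
  0 < Rr ->
  smooth Theta ->
  (forall r, 0 <= r < Rr -> 0 < Theta r) ->
  sigma <> 0 ->
  lambda1 Rr Theta sigma = Finite lam ->
  is_eigenpair Rr Theta sigma lam u ->
  (forall r, 0 <= r <= Rr -> 0 < u r) ->
  ( (0 < sigma -> forall r, 0 <= r < Rr -> 0 < Derive u r) /\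
    (sigma < 0 -> forall r, 0 <= r < Rr -> Derive u r < 0) /\
    (0 < sigma -> forall Rb, 0 < Rb < Rr ->
        Rbar_lt (lambda1 Rr Theta sigma) (lambda1 Rb Theta sigma)) ) /\
  ( (forall r, 0 <= r < Rr -> Derive_n (fun s => ln (Theta s)) 2 r < 0) ->
    (0 < sigma -> forall r, 0 <= r <= Rr ->
        0 <= Derive u r / u r <= sigma) /\
    (sigma < 0 -> forall r, 0 <= r <= Rr ->
        sigma <= Derive u r / u r <= 0) ).
Proof.
  intros HR Hsm HT _ Hlam [[Hud [Hudd _]] [_ [Hode [Hu0 HuR]]]] Hu.
  pose proof (fun x => Hsm 0%nat x : ex_derive Theta x) as HTd.
  pose proof (fun x => Hsm 1%nat x : ex_derive (Derive Theta) x) as HTdd.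
  assert (Hsign : forall eps, 0 < eps * sigma ->
            forall r, 0 <= r < Rr -> 0 < eps * Derive u r)
    by (apply (eigenfunction_deriv_sign Rr Theta u sigma lam); assumption).
  split; [split; [|split]|intros Hconc].
  - intros Hsig r Hr. specialize (Hsign 1 ltac:(lra) r Hr). lra.
  - intros Hsig r Hr. specialize (Hsign (-1) ltac:(lra) r Hr). lra.
  - intros Hsig Rb HRb.
    destruct (eigenvalue_gap Rr Theta u sigma lam) with (Rb := Rb)
      as [delta [Hdelta Hgap]]; try assumption.
    rewrite Hlam. apply Rbar_lt_le_trans with (lam + delta); [simpl; lra|].
    apply Rbar_le_Glb_Rbar. intros mu [v Hv]. exact (Hgap mu v Hv).
  - assert (Hbound : forall eps, 0 < eps * sigma -> forall r, 0 <= r <= Rr ->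
              0 <= eps * (Derive u r / u r) <= eps * sigma)
      by (intros eps; apply (log_deriv_bound Rr Theta u sigma lam); assumption).
    split; intros Hsig r Hr.
    + specialize (Hbound 1 ltac:(lra) r Hr). lra.
    + specialize (Hbound (-1) ltac:(lra) r Hr). lra.
Qed.
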